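(* Let $\mathcal P\subseteq\mathcal G$ be a pseudo-torsion class and $\mathcal Q=\mathcal P^\perp$. For every $M\in\mathcal G$ there is a unique strict subobject $tM$ of $M$ such that $tM\in\mathcal P$ and $fM:=M/tM\in\mathcal Q$; thus $0\to tM\to M\to fM\to 0$ is a strict exact sequence. Moreover, for every strict morphism $\varphi:M\to N$ with $M,N\in\mathcal G$, $\varphi(tM)\subseteq tN$, and the induced maps $tM\to tN$ and $fM\to fN$ are strict morphisms making the evident diagram with the two strict exact sequences commute.
   Context: Let $\Lambda$ be a finite dimensional algebra over a field and $\mathrm{mod}\text-\Lambda$ the category of finitely generated right $\Lambda$-modules. Fix a torsion class $\mathcal G\subseteq\mathrm{mod}\text-\Lambda$, i.e. a class of modules closed under isomorphisms, extensions and quotients. For $B\in\mathcal G$, a subobject of $B$ is a submodule of $B$ that lies in $\mathcal G$. A subobject $A\subseteq B$ is a strict subobject if $A\cap B'\in\mathcal G$ for every subobject $B'$ of $B$. A strict quotient of $B$ is $B/A$ with $A$ a strict subobject. A short exact sequence $0\to A\to B\to C\to0$ with $A,B,C\in\mathcal G$ is strict exact (and $B$ a strict extension of $A$ by $C$) if the image of $A$ is a strict subobject of $B$. A strict morphism is a homomorphism $f:A\to B$ with $A,B\in\mathcal G$ such that $\ker f\in\mathcal G$ is a strict subobject of $A$ and $\operatorname{im} f$ is a strict subobject of $B$. A pseudo-torsion class is a nonempty class $\mathcal P\subseteq\mathcal G$ closed under strict quotients and strict extensions. For $\mathcal X\subseteq\mathcal G$, $\mathcal X^\perp$ is the class of $Y\in\mathcal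 G$ such that every strict morphism $X\to Y$ with $X\in\mathcal X$ is zero. *)

(* Right modules over a finite dimensional algebra are
   represented concretely: a finitely generated right Lam-module is a
   finite dimensional F-vector space F^n (row vectors) together with the
   matrices of the right action of the elements of Lam. *)
From HB Require Import structures.
From mathcomp Require Import all_boot all_order all_algebra.
From mathcomp Require Import falgebra.
Set Implicit Arguments. Unset Strict Implicit. Unset Printing Implicit Defensive.
Import GRing.Theory.
Local Open Scope ring_scope.

Section Modules.
Variables (F : fieldType) (Lam : falgType F).

(* A (candidate) module: dimension and action matrices; row vector v acts
   as v *m ract M a. *)
Record rmod := RMod { rdim : nat; ract : Lam -> 'M[F]_rdim }.

Definition valid (M : rmod) : Prop :=
  [/\ forall (c : F) (a b : Lam), ract M (c *: a + b) = c *: ract M a + ract M b,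
      ract M 1 = 1%:M
    & forall a b : Lam, ract M (a * b) = ract M a *m ract M b].

Definition is_hom (M N : rmod) (f : 'M[F]_(rdim M, rdim N)) : Prop :=
  forall a : Lam, ract M a *m f = f *m ract N a.

Definition is_iso (M N : rmod) (f : 'M[F]_(rdim M, rdim N)) : Prop :=
  is_hom f /\ row_free f /\ row_full f.

Definition short_exact (A B C : rmod)
    (f : 'M[F]_(rdim A, rdim B)) (g : 'M[F]_(rdim B, rdim C)) : Prop :=
  [/\ is_hom f, is_hom g, row_free f, row_full g & (f == kermx g)%MS].

Definition mclass := rmod -> Prop.

Definition torsion_class (G : mclass) : Prop :=
  [/\ (forall M, G M -> valid M),
      (forall M N (f : 'M[F]_(rdim M, rdim N)), G M -> valid N -> is_iso f -> G N),
      (forall A B C (f : 'M[F]_(rdim A, rdim B)) (g : 'M[F]_(rdim B, rdim C)),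
          G A -> G C -> valid B -> short_exact f g -> G B)
    & (forall M N (g : 'M[F]_(rdim M, rdim N)),
          G M -> valid N -> is_hom g -> row_full g -> G N)].

(* A submodule U of M (given by the row space of U) is realized by X via the
   injective homomorphism e with image U. *)
Definition sub_real (M : rmod) k (U : 'M[F]_(k, rdim M))
    (X : rmod) (e : 'M[F]_(rdim X, rdim M)) : Prop :=
  [/\ valid X, is_hom e, row_free e & (e == U)%MS].

Definition quot_real (M : rmod) k (U : 'M[F]_(k, rdim M))
    (Y : rmod) (p : 'M[F]_(rdim M, rdim Y)) : Prop :=
  [/\ valid Y, is_hom p, row_full p & (kermx p == U)%MS].

Definition sub_in (C : mclass) (M : rmod) k (U : 'M[F]_(k, rdim M)) : Prop :=
  exists (X : rmod) (e : 'M[F]_(rdim X, rdim M)), sub_real U e /\ C X.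

Definition quot_in (C : mclass) (M : rmod) k (U : 'M[F]_(k, rdim M)) : Prop :=
  exists (Y : rmod) (p : 'M[F]_(rdim M, rdim Y)), quot_real U p /\ C Y.

Section Strict.
Variable G : mclass.

Definition subobject (B : rmod) k (A : 'M[F]_(k, rdim B)) : Prop := sub_in G A.

Definition strict_sub (B : rmod) k (A : 'M[F]_(k, rdim B)) : Prop :=
  subobject A /\
  forall k' (B' : 'M[F]_(k', rdim B)), subobject B' -> sub_in G (A :&: B')%MS.

Definition strict_exact (A B C : rmod)
    (f : 'M[F]_(rdim A, rdim B)) (g : 'M[F]_(rdim B, rdim C)) : Prop :=
  [/\ G A, G B, G C, short_exact f g & strict_sub f].

Definition strict_morphism (A B : rmod) (f : 'M[F]_(rdim A, rdim B)) : Prop :=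
  [/\ G A, G B, is_hom f, strict_sub (kermx f) & strict_sub f].

Definition pseudo_torsion (P : mclass) : Prop :=
  [/\ (forall M, P M -> G M),
      (exists M, P M),
      (forall B N (g : 'M[F]_(rdim B, rdim N)),
          P B -> valid N -> is_hom g -> row_full g -> strict_sub (kermx g) -> P N)
    & (forall A B C (f : 'M[F]_(rdim A, rdim B)) (g : 'M[F]_(rdim B, rdim C)),
          P A -> P C -> strict_exact f g -> P B)].

Definition perp (X : mclass) : mclass := fun Y =>
  G Y /\ forall A (f : 'M[F]_(rdim A, rdim Y)), X A -> strict_morphism f -> f = 0.

Definition torsion_part (P : mclass) (M : rmod) k (U : 'M[F]_(k, rdim M)) : Prop :=
  [/\ strict_sub U, sub_in P U & quot_in (perp P) U].

End Strict.
End Modules.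

(* The torsion part [tM] is a strict subobject of [M] that lies in [P] and has
   maximal rank among such; [0] is one, so it exists.  If a strict morphism
   [phi : A -> M/tM] with [A] in [P] were nonzero, the preimage in [M] of its
   image would be a strict subobject of larger rank, and it lies in [P] as a
   strict extension of [tM] by [im phi], itself a strict quotient of [A].
   For a strict morphism [phi : M -> N] the composite [tM -> M -> N -> fN] is
   strict, so it vanishes, being a strict morphism from [P] to [P^perp]; hence
   [phi (tM) <= tN], and with [phi = 1] this gives uniqueness.  All strictness
   arguments transport intersections with strict subobjects along images and
   preimages of strict morphisms, using that [G] is closed under extensions. *)

From HB Require Import structures.
From mathcomp Require Import all_boot all_order all_algebra.
From mathcomp Require Import falgebra zify.
From Stdlib Require Import Classical_Prop.
Import GRing.Theory.
Local Open Scope ring_scope.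
Set Implicit Arguments. Unset Strict Implicit. Unset Printing Implicit Defensive.

Lemma ex_max_bounded (Q : nat -> Prop) n :
  (exists r, Q r) -> (forall r, Q r -> r <= n)%N ->
  exists r, Q r /\ forall r', Q r' -> (r' <= r)%N.
Proof.
elim: n Q => [|n IHn] Q [r0 Qr0] bounded.
  by exists r0; split=> // r' /bounded; rewrite leqn0 => /eqP->.
have [Qn1 | nQn1] := classic (Q n.+1); first by exists n.+1; split=> // r' /bounded.
apply: IHn; first by exists r0.
by move=> r Qr; have := bounded _ Qr; rewrite leq_eqVlt => /orP[/eqP rn1 | //]; rewrite rn1 in Qr.
Qed.

Section MatrixPreimage.
Variable F : fieldType.

Definition preimmx m n k (f : 'M[F]_(m, n)) (D : 'M[F]_(k, n)) : 'M[F]_m :=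
  kermx (f *m cokermx D).

Lemma sub_preimmx m n k j (f : 'M[F]_(m, n)) (D : 'M[F]_(k, n)) (x : 'M[F]_(j, m)) :
  (x <= preimmx f D)%MS = (x *m f <= D)%MS.
Proof. by rewrite /preimmx sub_kermx mulmxA submxE. Qed.

Lemma preimmx_img_sub m n k (f : 'M[F]_(m, n)) (D : 'M[F]_(k, n)) :
  (preimmx f D *m f <= D)%MS.
Proof. by rewrite -sub_preimmx. Qed.

Lemma kermx_sub_preimmx m n k (f : 'M[F]_(m, n)) (D : 'M[F]_(k, n)) :
  (kermx f <= preimmx f D)%MS.
Proof. by rewrite sub_preimmx mulmx_ker sub0mx. Qed.

Lemma preimmx_capmx_kermx m n k (f : 'M[F]_(m, n)) (D : 'M[F]_(k, n)) :
  (preimmx f D :&: kermx f :=: kermx f)%MS.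
Proof. by apply/eqmxP; rewrite capmxSr sub_capmx kermx_sub_preimmx submx_refl. Qed.

Lemma preimmxS m n k1 k2 (f : 'M[F]_(m, n)) (D1 : 'M[F]_(k1, n)) (D2 : 'M[F]_(k2, n)) :
  (D1 <= D2)%MS -> (preimmx f D1 <= preimmx f D2)%MS.
Proof. by move=> sD12; rewrite sub_preimmx (submx_trans (preimmx_img_sub _ _)). Qed.

Lemma preimmxK m n k (f : 'M[F]_(m, n)) (D : 'M[F]_(k, n)) :
  (D <= f)%MS -> (preimmx f D *m f :=: D)%MS.
Proof.
move=> /submxP[Z ->]; apply/eqmxP; rewrite preimmx_img_sub /=.
by apply: submxMr; rewrite sub_preimmx.
Qed.

Lemma preimmx_cap m n k1 k2 (f : 'M[F]_(m, n)) (D1 : 'M[F]_(k1, n)) (D2 : 'M[F]_(k2, n)) :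
  (preimmx f (D1 :&: D2) :=: preimmx f D1 :&: preimmx f D2)%MS.
Proof.
apply/eqmxP/andP; split.
  by rewrite sub_capmx !preimmxS ?capmxSl ?capmxSr.
by rewrite sub_preimmx sub_capmx -!sub_preimmx capmxSl capmxSr.
Qed.

Lemma capmx_preimmxMr m n k j (f : 'M[F]_(m, n)) (D : 'M[F]_(k, n)) (B : 'M[F]_(j, m)) :
  ((preimmx f D :&: B) *m f :=: D :&: B *m f)%MS.
Proof.
apply/eqmxP/andP; split.
  rewrite sub_capmx (submx_trans _ (preimmx_img_sub f D)) ?submxMr ?capmxSl //.
  by rewrite capmxSr.
have /submxP[Z hZ] : (D :&: B *m f <= B *m f)%MS by rewrite capmxSr.
rewrite hZ mulmxA submxMr // sub_capmx submxMl andbT sub_preimmx.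
by rewrite -mulmxA -hZ capmxSl.
Qed.

Lemma kermxM_img m n p (e : 'M[F]_(m, n)) (q : 'M[F]_(n, p)) :
  (kermx (e *m q) *m e :=: e :&: kermx q)%MS.
Proof.
apply/eqmxP/andP; split.
  by rewrite sub_capmx submxMl; apply/sub_kermxP; rewrite -mulmxA mulmx_ker.
have /submxP[D hD] : (e :&: kermx q <= e)%MS by rewrite capmxSl.
rewrite hD submxMr // sub_kermx mulmxA -hD.
by apply/eqP/sub_kermxP; rewrite capmxSr.
Qed.

Lemma kermxM_preimmx m n p k (f : 'M[F]_(m, n)) (q : 'M[F]_(n, p)) (V : 'M[F]_(k, n)) :
  (kermx q :=: V)%MS -> (kermx (f *m q) :=: preimmx f V)%MS.
Proof.
move=> kqV; apply/eqmxP/andP; split.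
  by rewrite sub_preimmx -kqV sub_kermx -mulmxA mulmx_ker.
by rewrite sub_kermx mulmxA; apply/eqP/sub_kermxP; rewrite kqV preimmx_img_sub.
Qed.

Lemma kermxM_free m n p (g : 'M[F]_(m, n)) (e : 'M[F]_(n, p)) :
  row_free e -> (kermx (g *m e) :=: kermx g)%MS.
Proof.
move=> free_e; apply/eqmxP/andP; split.
  by rewrite sub_kermx -(mulmx_free_eq0 _ free_e) -mulmxA mulmx_ker.
by apply/sub_kermxP; rewrite mulmxA mulmx_ker mul0mx.
Qed.

Lemma capmxMfree n p k1 k2 (e : 'M[F]_(n, p)) (A : 'M[F]_(k1, n)) (B : 'M[F]_(k2, n)) :
  row_free e -> ((A :&: B) *m e :=: A *m e :&: B *m e)%MS.
Proof.
move=> free_e; apply/eqmxP; rewrite capmxMr /=.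
have /submxP[D hD] : (A *m e :&: B *m e <= A *m e)%MS by rewrite capmxSl.
have /submxP[D' hD'] : (A *m e :&: B *m e <= B *m e)%MS by rewrite capmxSr.
have DA_D'B : D *m A = D' *m B.
  by apply: (row_free_inj free_e); rewrite -!mulmxA -hD -hD'.
by rewrite hD mulmxA submxMr // sub_capmx submxMl DA_D'B submxMl.
Qed.

Lemma capmxA_sub n k1 k2 k3 (A : 'M[F]_(k1, n)) (X : 'M[F]_(k2, n)) (D : 'M[F]_(k3, n)) :
  (D <= A)%MS -> (A :&: X :&: D :=: D :&: X)%MS.
Proof.
move=> sDA; apply/eqmxP/andP; split.
  by rewrite sub_capmx capmxSr (submx_trans (capmxSl _ _) (capmxSr _ _)).
by rewrite !sub_capmx capmxSl capmxSr (submx_trans (capmxSl _ _) sDA).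
Qed.

Lemma row_free_mulr m n p (f : 'M[F]_(m, n)) (e : 'M[F]_(n, p)) :
  row_free (f *m e) -> row_free f.
Proof.
by rewrite /row_free => /eqP rfe; rewrite eqn_leq rank_leq_row -{1}rfe mxrankM_maxl.
Qed.

Lemma row_full_factor m n p (g : 'M[F]_(m, n)) (e : 'M[F]_(n, p)) (e' : 'M[F]_(m, p)) :
  row_free e -> g *m e = e' -> (e <= e')%MS -> row_full g.
Proof.
move=> free_e <- /submxP[w hw]; apply/row_fullP; exists w.
by apply: (row_free_inj free_e); rewrite mul1mx -mulmxA -hw.
Qed.

Lemma cokernel_exists n k (U : 'M[F]_(k, n)) :
  exists d (q : 'M[F]_(n, d)), row_full q /\ (kermx q :=: U)%MS.
Proof.
pose K := kermx U^T; pose q := (row_base K)^T.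
have Uq : U *m q = 0.
  apply: trmx_inj; rewrite trmx_mul trmxK trmx0; apply/sub_kermxP.
  by rewrite eq_row_base.
have rank_q : \rank q = \rank K by rewrite mxrank_tr; apply/eqmx_rank/eqmxP/eq_row_base.
have full_q : row_full q by rewrite /row_full rank_q.
exists (\rank K), q; split=> //; apply/eqmx_sym/eqmxP.
have sUk : (U <= kermx q)%MS by apply/sub_kermxP.
rewrite -(geq_leqif (mxrank_leqif_eq sUk)) mxrank_ker rank_q mxrank_ker mxrank_tr.
by rewrite subKn ?rank_leq_col.
Qed.

Lemma mulmx_pinv_factor n d m d' (p : 'M[F]_(n, d)) (r : 'M[F]_(n, m)) (q : 'M[F]_(m, d')) :
  row_full p -> (kermx p *m r <= kermx q)%MS -> p *m (pinvmx p *m r *m q) = r *m q.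
Proof.
move=> full_p ker_r.
have proj_ker : (1%:M - p *m pinvmx p <= kermx p)%MS.
  by apply/sub_kermxP; rewrite mulmxBl mul1mx mulmxKpV ?subrr // submx_full.
have /sub_kermxP : ((1%:M - p *m pinvmx p) *m r <= kermx q)%MS.
  exact: submx_trans (submxMr _ proj_ker) ker_r.
by rewrite !mulmxBl mul1mx => /eqP; rewrite subr_eq0 !mulmxA => /eqP <-.
Qed.

End MatrixPreimage.

Section Submodules.
Variables (F : fieldType) (Lam : falgType F).
Local Notation rmod := (rmod Lam).

Definition submodmx (M : rmod) k (U : 'M[F]_(k, rdim M)) :=
  forall a, stablemx U (ract M a).

Lemma hom_mul (X M N : rmod) (f : 'M[F]_(rdim X, rdim M)) (g : 'M[F]_(rdim M, rdim N)) :
  is_hom f -> is_hom g -> is_hom (f *m g).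
Proof. by move=> hf hg a; rewrite mulmxA hf -!mulmxA hg. Qed.

Lemma hom1 (M : rmod) : is_hom (1%:M : 'M[F]_(rdim M)).
Proof. by move=> a; rewrite mulmx1 mul1mx. Qed.

Lemma valid_free_hom (X M : rmod) (e : 'M[F]_(rdim X, rdim M)) :
  valid M -> is_hom e -> row_free e -> valid X.
Proof.
move=> [linM M1 MM] he free_e; split.
- move=> c a b; apply: (row_free_inj free_e).
  by rewrite he linM mulmxDr mulmxDl -scalemxAl !he scalemxAr.
- by apply: (row_free_inj free_e); rewrite he M1 mulmx1 mul1mx.
- by move=> a b; apply: (row_free_inj free_e); rewrite he MM mulmxA -he -!mulmxA he.
Qed.

Lemma valid_full_hom (M Y : rmod) (p : 'M[F]_(rdim M, rdim Y)) :
  valid M -> is_hom p -> row_full p -> valid Y.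
Proof.
move=> [linM M1 MM] hp full_p; split.
- move=> c a b; apply: (row_full_inj full_p).
  by rewrite -hp linM mulmxDl mulmxDr -scalemxAl !hp scalemxAr.
- by apply: (row_full_inj full_p); rewrite -hp M1 mulmx1 mul1mx.
- by move=> a b; apply: (row_full_inj full_p); rewrite -hp MM -mulmxA hp !mulmxA hp.
Qed.

Lemma hom_factor (X Z M : rmod) (e : 'M[F]_(rdim X, rdim M)) (e' : 'M[F]_(rdim Z, rdim M)) :
  is_hom e -> is_hom e' -> row_free e' -> (e <= e')%MS ->
  is_hom (e *m pinvmx e') /\ e *m pinvmx e' *m e' = e.
Proof.
move=> he he' free_e' /mulmxKpV ee'; split=> // a.
apply: (row_free_inj free_e').
by rewrite -mulmxA ee' -[RHS]mulmxA he' mulmxA ee' he.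
Qed.

Lemma submodmx_img (M N : rmod) k (U : 'M[F]_(k, rdim M)) (f : 'M[F]_(rdim M, rdim N)) :
  submodmx U -> is_hom f -> submodmx (U *m f).
Proof. by move=> sU hf a; rewrite -mulmxA -hf mulmxA submxMr. Qed.

Lemma submodmx_preimmx (M N : rmod) k (D : 'M[F]_(k, rdim N)) (f : 'M[F]_(rdim M, rdim N)) :
  submodmx D -> is_hom f -> submodmx (preimmx f D).
Proof.
move=> sD hf a; rewrite sub_preimmx -mulmxA hf mulmxA.
exact: submx_trans (submxMr _ (preimmx_img_sub _ _)) (sD a).
Qed.

Lemma submodmx_cap (M : rmod) k1 k2 (U : 'M[F]_(k1, rdim M)) (V : 'M[F]_(k2, rdim M)) :
  submodmx U -> submodmx V -> submodmx (U :&: V)%MS.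
Proof.
move=> sU sV a; rewrite sub_capmx.
by rewrite (submx_trans (submxMr _ (capmxSl _ _)) (sU a))
           (submx_trans (submxMr _ (capmxSr _ _)) (sV a)).
Qed.

Lemma submodmx_eq (M : rmod) k1 k2 (U : 'M[F]_(k1, rdim M)) (V : 'M[F]_(k2, rdim M)) :
  (U :=: V)%MS -> submodmx U -> submodmx V.
Proof. by move=> eqUV sU a; rewrite -(eqmxMr _ eqUV) -eqUV. Qed.

Lemma submodmx_hom (X M : rmod) (e : 'M[F]_(rdim X, rdim M)) : is_hom e -> submodmx e.
Proof. by move=> he a; rewrite -he submxMl. Qed.

Lemma sub_real_submodmx (M X : rmod) k (U : 'M[F]_(k, rdim M)) (e : 'M[F]_(rdim X, rdim M)) :
  sub_real U e -> submodmx U.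
Proof. by move=> [_ he _ /eqmxP eU]; apply: submodmx_eq eU (submodmx_hom he). Qed.

Lemma sub_in_submodmx (C : mclass Lam) (M : rmod) k (U : 'M[F]_(k, rdim M)) :
  sub_in C U -> submodmx U.
Proof. by move=> [X [e [rU _]]]; exact: sub_real_submodmx rU. Qed.

Lemma sub_in_eq (C : mclass Lam) (M : rmod) k1 k2
  (U : 'M[F]_(k1, rdim M)) (V : 'M[F]_(k2, rdim M)) :
  (U :=: V)%MS -> sub_in C U -> sub_in C V.
Proof.
move=> eqUV [X [e [[vX he free_e /eqmxP eU] CX]]]; exists X, e; split=> //; split=> //.
by apply/eqmxP; apply: eqmx_trans eU eqUV.
Qed.

Lemma strict_sub_eq (G : mclass Lam) (M : rmod) k1 k2
  (U : 'M[F]_(k1, rdim M)) (V : 'M[F]_(k2, rdim M)) :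
  (U :=: V)%MS -> strict_sub G U -> strict_sub G V.
Proof.
move=> eqUV [sU capU]; split; first exact: sub_in_eq eqUV sU.
by move=> k' B' sB'; apply: sub_in_eq (cap_eqmx eqUV (eqmx_refl _)) (capU _ _ sB').
Qed.

Lemma sub_real_exists (M : rmod) k (U : 'M[F]_(k, rdim M)) :
  valid M -> submodmx U -> exists (X : rmod) (e : 'M[F]_(rdim X, rdim M)), sub_real U e.
Proof.
move=> vM sU.
pose X := @RMod F Lam (\rank U) (fun a => row_base U *m ract M a *m pinvmx (row_base U)).
have he : is_hom (M := X) (N := M) (row_base U).
  by move=> a /=; rewrite mulmxKpV // (eqmxMr _ (eq_row_base U)) eq_row_base.
exists X, (row_base U); split=> //.
- exact: valid_free_hom vM he (row_base_free U).
- exact: row_base_free.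
- by apply/eqmxP; exact: eq_row_base.
Qed.

Lemma quot_real_exists (M : rmod) k (U : 'M[F]_(k, rdim M)) :
  valid M -> submodmx U -> exists (Y : rmod) (p : 'M[F]_(rdim M, rdim Y)), quot_real U p.
Proof.
move=> vM sU; have [d [q [full_q kqU]]] := cokernel_exists U.
pose Y := @RMod F Lam d (fun a => pinvmx q *m ract M a *m q).
have hq : is_hom (M := M) (N := Y) q.
  by move=> a; rewrite /= mulmx_pinv_factor // kqU (eqmxMr _ kqU) sU.
exists Y, q; split=> //; last exact/eqmxP.
exact: valid_full_hom vM hq full_q.
Qed.

Lemma sub_in_zero (C : mclass Lam) (M Z : rmod) :
  C Z -> valid Z -> rdim Z = 0%N -> sub_in C (0 : 'M[F]_(rdim M)).
Proof.
move=> CZ vZ dimZ; exists Z, 0; split=> //; split=> //.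
- by move=> a; rewrite mul0mx mulmx0.
- by rewrite /row_free mxrank0 dimZ.
- by rewrite !sub0mx.
Qed.

Lemma quot_real_full_dim (M Y : rmod) (p : 'M[F]_(rdim M, rdim Y)) :
  quot_real (1%:M : 'M[F]_(rdim M)) p -> rdim Y = 0%N.
Proof.
move=> [_ _ /eqP rank_p /eqmx_rank]; rewrite mxrank_ker mxrank1 rank_p.
by have := rank_leq_row p; rewrite rank_p; lia.
Qed.

End Submodules.

Section TorsionClass.
Variables (F : fieldType) (Lam : falgType F) (G : mclass Lam).
Hypothesis HG : torsion_class G.
Local Notation rmod := (rmod Lam).

Lemma torsion_valid (M : rmod) : G M -> valid M.
Proof. by case: HG => vG _ _ _; exact: vG. Qed.

Lemma torsion_quot (M N : rmod) (g : 'M[F]_(rdim M, rdim N)) :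
  G M -> valid N -> is_hom g -> row_full g -> G N.
Proof. by case: HG => _ _ _ quotG; exact: quotG. Qed.

Lemma sub_real_in (M X : rmod) k (U : 'M[F]_(k, rdim M)) (e : 'M[F]_(rdim X, rdim M)) :
  sub_real U e -> sub_in G U -> G X.
Proof.
move=> [vX he free_e /eqmxP eU] [X0 [e0 [[vX0 he0 _ /eqmxP eU0] GX0]]].
have [hg E] : is_hom (e0 *m pinvmx e) /\ e0 *m pinvmx e *m e = e0.
  by apply: hom_factor; rewrite // eU0 eU.
by apply: (torsion_quot GX0 vX hg); apply: row_full_factor free_e E _; rewrite eU eU0.
Qed.

Lemma sub_in_img (M N : rmod) k (A : 'M[F]_(k, rdim M)) (f : 'M[F]_(rdim M, rdim N)) :
  valid N -> is_hom f -> sub_in G A -> sub_in G (A *m f).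
Proof.
move=> vN hf [X [e [[vX he fe /eqmxP eA] GX]]].
have sA : submodmx A by apply: submodmx_eq eA (submodmx_hom he).
have [Z [e' [vZ he' free_e' /eqmxP eAf]]] := sub_real_exists vN (submodmx_img sA hf).
have eAf' : (e *m f :=: e')%MS by apply: eqmx_trans (eqmxMr _ eA) (eqmx_sym eAf).
have [hg E] : is_hom (e *m f *m pinvmx e') /\ e *m f *m pinvmx e' *m e' = e *m f.
  by apply: hom_factor; rewrite ?eAf' //; exact: hom_mul.
exists Z, e'; split; first by split=> //; apply/eqmxP.
by apply: (torsion_quot GX vZ hg); apply: row_full_factor free_e' E _; rewrite eAf'.
Qed.

(* [0 -> V :&: kermx q -> V -> V *m q -> 0], read through the realizations
   [ea], [e] and [ec] of its three terms. *)
Lemma short_exact_restrict (M N X A C : rmod) (q : 'M[F]_(rdim M, rdim N))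
  k1 k2 k3 (V : 'M[F]_(k1, rdim M)) (Va : 'M[F]_(k2, rdim M)) (Vc : 'M[F]_(k3, rdim N))
  (e : 'M[F]_(rdim X, rdim M)) (ea : 'M[F]_(rdim A, rdim M)) (ec : 'M[F]_(rdim C, rdim N)) :
  is_hom q -> sub_real V e -> sub_real Va ea -> sub_real Vc ec ->
  (Va :=: V :&: kermx q)%MS -> (Vc :=: V *m q)%MS ->
  short_exact (ea *m pinvmx e) (e *m q *m pinvmx ec).
Proof.
move=> hq [vX he free_e /eqmxP eV] [vA hea free_ea /eqmxP eVa] [vC hec free_ec /eqmxP eVc].
move=> Ea Ec.
have eaV : (ea <= e)%MS by rewrite eVa Ea eV capmxSl.
have eaK : (ea <= kermx q)%MS by rewrite eVa Ea capmxSr.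
have eqc : (e *m q :=: ec)%MS.
  exact: eqmx_trans (eqmxMr _ eV) (eqmx_trans (eqmx_sym Ec) (eqmx_sym eVc)).
have [hf Ef] := hom_factor hea he free_e eaV.
have [hg Eg] : is_hom (e *m q *m pinvmx ec) /\ e *m q *m pinvmx ec *m ec = e *m q.
  by apply: hom_factor; rewrite ?eqc //; exact: hom_mul.
set f := ea *m pinvmx e in hf Ef *; set g := e *m q *m pinvmx ec in hg Eg *.
split=> //.
- by apply: (@row_free_mulr _ _ _ _ f e); rewrite Ef.
- by apply: row_full_factor free_ec Eg _; rewrite eqc.
apply/andP; split.
  apply/sub_kermxP/eqP; rewrite -(mulmx_free_eq0 _ free_ec) -mulmxA Eg mulmxA Ef.
  exact/eqP/sub_kermxP.
have Ke : (kermx g *m e <= ea)%MS.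
  rewrite eVa Ea sub_capmx -eV submxMl.
  by apply/sub_kermxP; rewrite -mulmxA -Eg mulmxA mulmx_ker mul0mx.
have /submxP[D hD] := Ke.
have -> : kermx g = D *m f by apply: (row_free_inj free_e); rewrite hD -mulmxA Ef.
exact: submxMl.
Qed.

Lemma sub_in_ext (M N : rmod) k (V : 'M[F]_(k, rdim M)) (q : 'M[F]_(rdim M, rdim N)) :
  valid M -> valid N -> is_hom q -> submodmx V ->
  sub_in G (V :&: kermx q)%MS -> sub_in G (V *m q) -> sub_in G V.
Proof.
move=> vM vN hq sV [A [ea [rA GA]]] [C [ec [rC GC]]].
have [X [e rV]] := sub_real_exists vM sV.
exists X, e; split=> //.
case: HG => _ _ extG _; apply: (extG _ _ _ _ _ GA GC); first by case: rV.
exact: short_exact_restrict hq rV rA rC (eqmx_refl _) (eqmx_refl _).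
Qed.

Lemma sub_in_free_img (X M : rmod) (e : 'M[F]_(rdim X, rdim M)) k (U : 'M[F]_(k, rdim X)) :
  is_hom e -> row_free e -> sub_in G (U *m e) -> sub_in G U.
Proof.
move=> he free_e [X0 [e0 [[vX0 he0 free_e0 /eqmxP eU0] GX0]]].
have [hg E] : is_hom (e0 *m pinvmx e) /\ e0 *m pinvmx e *m e = e0.
  by apply: hom_factor; rewrite // eU0 submxMl.
exists X0, (e0 *m pinvmx e); split=> //; split=> //.
- by apply: (@row_free_mulr _ _ _ _ _ e); rewrite E.
- by apply/eqmxP/(eqmxMfree free_e); rewrite E.
Qed.

Lemma strict_sub_free_img (X M : rmod) (e : 'M[F]_(rdim X, rdim M)) k (U : 'M[F]_(k, rdim X)) :
  valid M -> is_hom e -> row_free e -> sub_in G (U *m e) ->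
  (forall k' (D : 'M[F]_(k', rdim M)), sub_in G D -> (D <= e)%MS ->
      sub_in G (U *m e :&: D)%MS) ->
  strict_sub G U.
Proof.
move=> vM he free_e sU capU; split; first exact: sub_in_free_img he free_e sU.
move=> k' B' sB'; apply: (sub_in_free_img he free_e).
apply: sub_in_eq (eqmx_sym (capmxMfree _ _ free_e)) _.
exact: capU (sub_in_img vM he sB') (submxMl _ _).
Qed.

Lemma strict_sub_img (M N : rmod) (f : 'M[F]_(rdim M, rdim N)) k (W : 'M[F]_(k, rdim M)) :
  valid N -> is_hom f -> sub_in G W ->
  (forall k' (C : 'M[F]_(k', rdim N)), sub_in G C -> sub_in G (W :&: preimmx f C)%MS) ->
  strict_sub G (W *m f).
Proof.
move=> vN hf sW capW; split; first exact: sub_in_img vN hf sW.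
move=> k' C sC; rewrite capmxC; apply: sub_in_eq (capmx_preimmxMr f C W) _.
by apply: sub_in_img vN hf _; rewrite capmxC; exact: capW.
Qed.

Lemma sub_in_preimmx (M Y : rmod) (p : 'M[F]_(rdim M, rdim Y)) k (D : 'M[F]_(k, rdim Y)) :
  valid M -> valid Y -> is_hom p -> sub_in G (kermx p) -> (D <= p)%MS ->
  sub_in G D -> sub_in G (preimmx p D).
Proof.
move=> vM vY hp sK sDp sD; apply: (sub_in_ext vM vY hp).
- exact: submodmx_preimmx (sub_in_submodmx sD) hp.
- exact: sub_in_eq (eqmx_sym (preimmx_capmx_kermx _ _)) sK.
- exact: sub_in_eq (eqmx_sym (preimmxK sDp)) sD.
Qed.

Lemma strict_sub_of_preimmx (M Y : rmod) (p : 'M[F]_(rdim M, rdim Y)) k (D : 'M[F]_(k, rdim Y)) :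
  valid M -> valid Y -> is_hom p -> row_full p -> sub_in G (kermx p) ->
  sub_in G (preimmx p D) ->
  (forall k' (C : 'M[F]_(k', rdim M)), sub_in G C -> sub_in G (preimmx p D :&: C)%MS) ->
  strict_sub G D.
Proof.
move=> vM vY hp full_p sK sD capD.
have pK k0 (D0 : 'M[F]_(k0, rdim Y)) := preimmxK (submx_full D0 full_p).
split; first exact: sub_in_eq (pK _ _) (sub_in_img vY hp sD).
move=> k' B' sB'; apply: sub_in_eq (pK _ _) _; apply: (sub_in_img vY hp).
apply: sub_in_eq (eqmx_sym (preimmx_cap _ _ _)) _.
exact: capD (sub_in_preimmx vM vY hp sK (submx_full _ full_p) sB').
Qed.

Lemma strict_sub_cap_preimmx (M N : rmod) (phi : 'M[F]_(rdim M, rdim N)) k1 k2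
  (U : 'M[F]_(k1, rdim M)) (C : 'M[F]_(k2, rdim N)) :
  strict_morphism G phi -> strict_sub G U -> sub_in G C ->
  sub_in G (U :&: preimmx phi C)%MS.
Proof.
move=> [GM GN hphi sK sI] sU sC.
have vM := torsion_valid GM; have vN := torsion_valid GN.
have eqC : (preimmx phi (C :&: phi) :=: preimmx phi C)%MS.
  apply/eqmxP/andP; split; first by rewrite preimmxS ?capmxSl.
  by rewrite sub_preimmx sub_capmx -sub_preimmx submx_refl submxMl.
apply: sub_in_eq (cap_eqmx (eqmx_refl U) eqC) (proj2 sU _ _ _).
apply: (sub_in_ext vM vN hphi).
- exact: submodmx_preimmx (submodmx_cap (sub_in_submodmx sC) (submodmx_hom hphi)) hphi.
- exact: sub_in_eq (eqmx_sym (preimmx_capmx_kermx _ _)) (proj1 sK).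
- apply: sub_in_eq (eqmx_sym (preimmxK (capmxSr _ _))) _.
  by rewrite capmxC; apply: (proj2 sI).
Qed.

Lemma sub_in_self (M : rmod) : G M -> sub_in G (1%:M : 'M[F]_(rdim M)).
Proof.
move=> GM; exists M, 1%:M; split=> //; split; rewrite ?submx_refl //.
- exact: torsion_valid.
- exact: hom1.
- by rewrite row_free_unit unitmx1.
Qed.

Lemma strict_sub_self (M : rmod) : G M -> strict_sub G (1%:M : 'M[F]_(rdim M)).
Proof.
move=> GM; split; first exact: sub_in_self.
by move=> k B sB; apply: sub_in_eq sB; apply/eqmxP; rewrite sub_capmx submx1 submx_refl capmxSr.
Qed.

Lemma strict_sub0 (M : rmod) : G M -> strict_sub G (0 : 'M[F]_(rdim M)).
Proof.
move=> GM; have vM := torsion_valid GM.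
have [Y [p rp]] := quot_real_exists vM (fun a => submx1 (1%:M *m ract M a)).
case: (rp) => vY hp full_p _; have GY := torsion_quot GM vY hp full_p.
have sG0 := sub_in_zero M GY vY (quot_real_full_dim rp).
by split=> // k B _; rewrite cap0mx.
Qed.

Lemma strict_morphism1 (M : rmod) : G M -> strict_morphism G (1%:M : 'M[F]_(rdim M)).
Proof.
move=> GM; split=> //; [exact: hom1 | | exact: strict_sub_self].
suff /eqP-> : kermx (1%:M : 'M[F]_(rdim M)) == 0 by exact: strict_sub0.
by rewrite kermx_eq0 row_free_unit unitmx1.
Qed.

Lemma sub_in_cap_preimmx (M N : rmod) (phi : 'M[F]_(rdim M, rdim N)) k1 k2
  (B : 'M[F]_(k1, rdim M)) (V : 'M[F]_(k2, rdim N)) :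
  strict_morphism G phi -> strict_sub G V -> sub_in G B ->
  sub_in G (B :&: preimmx phi V)%MS.
Proof.
move=> [GM GN hphi sK _] [sV capV] sB.
have vM := torsion_valid GM; have vN := torsion_valid GN.
apply: (sub_in_ext vM vN hphi).
- exact: submodmx_cap (sub_in_submodmx sB) (submodmx_preimmx (sub_in_submodmx sV) hphi).
- apply: sub_in_eq (proj2 sK _ _ sB); apply/eqmxP/andP; split.
    rewrite !sub_capmx capmxSr capmxSl /= andbT.
    exact: submx_trans (capmxSl _ _) (kermx_sub_preimmx _ _).
  by rewrite sub_capmx capmxSr (submx_trans (capmxSl _ _) (capmxSl _ _)).
- rewrite capmxC; apply: sub_in_eq (capV _ _ (sub_in_img vN hphi sB)).
  exact: eqmx_sym (capmx_preimmxMr _ _ _).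
Qed.

Lemma strict_sub_img_cap (M N : rmod) (phi : 'M[F]_(rdim M, rdim N)) k1 k2
  (U : 'M[F]_(k1, rdim M)) (D : 'M[F]_(k2, rdim N)) :
  strict_morphism G phi -> strict_sub G U -> sub_in G D -> sub_in G (U *m phi :&: D)%MS.
Proof.
move=> smphi sU sD; have [_ GN hphi _ _] := smphi.
apply: sub_in_eq _ (sub_in_img (torsion_valid GN) hphi (strict_sub_cap_preimmx smphi sU sD)).
by rewrite capmxC [X in (_ :=: X)%MS]capmxC; exact: capmx_preimmxMr.
Qed.

(* Strict morphisms need not compose; this composite is strict because its
   kernel and image are cut out by the strict subobjects [U] and [V]. *)
Lemma strict_morphism_sub_quot (M N X Y : rmod) (phi : 'M[F]_(rdim M, rdim N)) kU kV
  (U : 'M[F]_(kU, rdim M)) (V : 'M[F]_(kV, rdim N))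
  (e : 'M[F]_(rdim X, rdim M)) (p : 'M[F]_(rdim N, rdim Y)) :
  strict_morphism G phi -> sub_real U e -> strict_sub G U ->
  quot_real V p -> strict_sub G V -> strict_morphism G (e *m phi *m p).
Proof.
move=> smphi rU sU rV sV; have [GM GN hphi _ _] := smphi.
have vM := torsion_valid GM; have vN := torsion_valid GN.
have GX := sub_real_in rU (proj1 sU).
case: rU => vX he free_e /eqmxP eU; case: rV => vY hp full_p /eqmxP kpV.
have se : sub_in G e := sub_in_eq (eqmx_sym eU) (proj1 sU).
have sK : sub_in G (kermx p) := sub_in_eq (eqmx_sym kpV) (proj1 sV).
have Ke : (kermx (e *m phi *m p) *m e :=: e :&: preimmx phi V)%MS.
  rewrite -mulmxA; apply: eqmx_trans (kermxM_img _ _) _.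
  exact: cap_eqmx (eqmx_refl _) (kermxM_preimmx _ kpV).
split=> //; first exact: torsion_quot GN vY hp full_p.
- exact: hom_mul (hom_mul he hphi) hp.
- apply: (strict_sub_free_img vM he free_e).
    apply: sub_in_eq (sub_in_cap_preimmx smphi sV (proj1 sU)).
    exact: eqmx_sym (eqmx_trans Ke (cap_eqmx eU (eqmx_refl _))).
  move=> k' D sD sDe; apply: sub_in_eq (sub_in_cap_preimmx smphi sV sD).
  exact: eqmx_sym (eqmx_trans (cap_eqmx Ke (eqmx_refl D)) (capmxA_sub _ sDe)).
- apply: (strict_sub_img vY hp (sub_in_img vN hphi se)) => k' C sC.
  have sC' := sub_in_preimmx vN vY hp sK (submx_full _ full_p) sC.
  exact: strict_sub_img_cap smphi (strict_sub_eq (eqmx_sym eU) sU) sC'.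
Qed.

Lemma strict_sub_preimmx_img (M Y A : rmod) k (T : 'M[F]_(k, rdim M))
  (p : 'M[F]_(rdim M, rdim Y)) (phi : 'M[F]_(rdim A, rdim Y)) :
  valid M -> strict_sub G T -> quot_real T p -> strict_morphism G phi ->
  strict_sub G (preimmx p phi).
Proof.
move=> vM sT [vY hp full_p /eqmxP kpT] [_ _ hphi _ sIphi].
have sK : sub_in G (kermx p) := sub_in_eq (eqmx_sym kpT) (proj1 sT).
have TI : (T <= preimmx p phi)%MS by rewrite -kpT kermx_sub_preimmx.
split; first exact: sub_in_preimmx vM vY hp sK (submx_full _ full_p) (proj1 sIphi).
move=> k' B' sB'; apply: (sub_in_ext vM vY hp).
- exact: submodmx_cap (submodmx_preimmx (sub_in_submodmx (proj1 sIphi)) hp)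
                      (sub_in_submodmx sB').
- apply: sub_in_eq (proj2 sT _ _ sB'); apply/eqmxP/andP; split.
    by rewrite !sub_capmx capmxSr (submx_trans (capmxSl _ _) TI) kpT capmxSl.
  by rewrite sub_capmx -kpT capmxSr (submx_trans (capmxSl _ _) (capmxSr _ _)).
- apply: sub_in_eq (eqmx_sym (capmx_preimmxMr p phi B')) _.
  exact: (proj2 sIphi _ _ (sub_in_img vY hp sB')).
Qed.

Lemma strict_morphism_restrict (M N X X' : rmod) (phi : 'M[F]_(rdim M, rdim N)) kU kV
  (U : 'M[F]_(kU, rdim M)) (V : 'M[F]_(kV, rdim N))
  (e : 'M[F]_(rdim X, rdim M)) (e' : 'M[F]_(rdim X', rdim N)) :
  strict_morphism G phi -> strict_sub G U -> sub_in G V -> (U *m phi <= V)%MS ->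
  sub_real U e -> sub_real V e' ->
  strict_morphism G (e *m phi *m pinvmx e') /\ e *m phi *m pinvmx e' *m e' = e *m phi.
Proof.
move=> smphi sU sV UV rU rV; have [GM GN hphi sK _] := smphi.
have vM := torsion_valid GM; have vN := torsion_valid GN.
have GX := sub_real_in rU (proj1 sU); have GX' := sub_real_in rV sV.
case: rU => vX he free_e /eqmxP eU; case: rV => vX' he' free_e' /eqmxP eV.
have se : sub_in G e := sub_in_eq (eqmx_sym eU) (proj1 sU).
have [halpha Ealpha] : is_hom (e *m phi *m pinvmx e') /\ e *m phi *m pinvmx e' *m e' = e *m phi.
  by apply: hom_factor; rewrite ?eV ?(eqmxMr phi eU) //; exact: hom_mul.
set alpha := e *m phi *m pinvmx e' in halpha Ealpha *.
have Ke : (kermx alpha *m e :=: e :&: kermx phi)%MS.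
  apply: eqmx_trans (kermxM_img e phi); rewrite -Ealpha.
  exact: eqmx_sym (eqmxMr e (kermxM_free _ free_e')).
split=> //; split=> //.
- apply: (strict_sub_free_img vM he free_e).
    by apply: sub_in_eq (proj2 sK _ _ se); rewrite capmxC; exact: eqmx_sym Ke.
  move=> k' D sD sDe; apply: sub_in_eq (proj2 sK _ _ sD).
  rewrite capmxC; apply: eqmx_sym.
  exact: eqmx_trans (cap_eqmx Ke (eqmx_refl D)) (capmxA_sub _ sDe).
- apply: (strict_sub_free_img vN he' free_e'); rewrite Ealpha.
    exact: sub_in_img vN hphi se.
  move=> k' D sD _; exact: strict_sub_img_cap smphi (strict_sub_eq (eqmx_sym eU) sU) sD.
Qed.

Lemma strict_morphism_quot (M N Y Y' : rmod) (phi : 'M[F]_(rdim M, rdim N)) kU kV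
  (U : 'M[F]_(kU, rdim M)) (V : 'M[F]_(kV, rdim N))
  (p : 'M[F]_(rdim M, rdim Y)) (p' : 'M[F]_(rdim N, rdim Y')) :
  strict_morphism G phi -> sub_in G U -> strict_sub G V -> (U *m phi <= V)%MS ->
  quot_real U p -> quot_real V p' ->
  strict_morphism G (pinvmx p *m phi *m p') /\ p *m (pinvmx p *m phi *m p') = phi *m p'.
Proof.
move=> smphi sU sV UV rU rV; have [GM GN hphi _ sI] := smphi.
have vM := torsion_valid GM; have vN := torsion_valid GN.
case: rU => vY hp full_p /eqmxP kpU; case: rV => vY' hp' full_p' /eqmxP kpV.
have sKp : sub_in G (kermx p) := sub_in_eq (eqmx_sym kpU) sU.
have sKp' : sub_in G (kermx p') := sub_in_eq (eqmx_sym kpV) (proj1 sV).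
have Ebeta : p *m (pinvmx p *m phi *m p') = phi *m p'.
  by apply: mulmx_pinv_factor; rewrite // (eqmxMr phi kpU) kpV.
set beta := pinvmx p *m phi *m p' in Ebeta *.
have hbeta : is_hom beta.
  move=> a; apply: (row_full_inj full_p).
  by rewrite mulmxA -hp -mulmxA Ebeta mulmxA hphi -mulmxA hp' [RHS]mulmxA Ebeta mulmxA.
have Kbeta : (preimmx p (kermx beta) :=: preimmx phi V)%MS.
  apply: eqmx_trans (eqmx_sym (kermxM_preimmx p (eqmx_refl (kermx beta)))) _.
  by rewrite Ebeta; exact: kermxM_preimmx.
split=> //; split=> //.
- exact: torsion_quot GM vY hp full_p.
- exact: torsion_quot GN vY' hp' full_p'.
- apply: (strict_sub_of_preimmx vM vY hp full_p sKp).
    apply: sub_in_eq (eqmx_sym Kbeta) _.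
    by rewrite -[preimmx phi V]cap1mx; exact: sub_in_cap_preimmx smphi sV (sub_in_self GM).
  move=> k' C sC; rewrite capmxC.
  apply: sub_in_eq (sub_in_cap_preimmx smphi sV sC).
  exact: cap_eqmx (eqmx_refl C) (eqmx_sym Kbeta).
- apply: strict_sub_eq (eqmxMfull _ full_p) _; rewrite Ebeta.
  apply: (strict_sub_img vY' hp' (proj1 sI)) => k' C sC.
  exact: (proj2 sI _ _ (sub_in_preimmx vN vY' hp' sKp' (submx_full _ full_p') sC)).
Qed.

Lemma strict_exact_sub_quot (M X Y : rmod) k (T : 'M[F]_(k, rdim M))
  (e : 'M[F]_(rdim X, rdim M)) (p : 'M[F]_(rdim M, rdim Y)) :
  G M -> strict_sub G T -> sub_real T e -> quot_real T p -> strict_exact G e p.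
Proof.
move=> GM sT rT [vY hp full_p /eqmxP kpT].
have GX := sub_real_in rT (proj1 sT); case: rT => _ he free_e /eqmxP eT.
split=> //; first exact: torsion_quot GM vY hp full_p.
  by split=> //; apply/eqmxP; exact: eqmx_trans eT (eqmx_sym kpT).
exact: strict_sub_eq (eqmx_sym eT) sT.
Qed.

End TorsionClass.

Section PseudoTorsion.
Variables (F : fieldType) (Lam : falgType F) (G P : mclass Lam).
Hypothesis HG : torsion_class G.
Hypothesis HP : pseudo_torsion G P.
Local Notation rmod := (rmod Lam).

Lemma pseudo_torsion_in (X : rmod) : P X -> G X.
Proof. by case: HP => PG _ _ _; exact: PG. Qed.

Lemma pseudo_torsion_quot (B N : rmod) (g : 'M[F]_(rdim B, rdim N)) :
  P B -> valid N -> is_hom g -> row_full g -> strict_sub G (kermx g) -> P N.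
Proof. by case: HP => _ _ quotP _; exact: quotP. Qed.

Lemma sub_in_P0 (M : rmod) : sub_in P (0 : 'M[F]_(rdim M)).
Proof.
have [M0 PM0] : exists M0, P M0 by case: HP.
have GM0 := pseudo_torsion_in PM0; have vM0 := torsion_valid HG GM0.
have [Y [p rp]] := quot_real_exists vM0 (fun a => submx1 (1%:M *m ract M0 a)).
case: (rp) => vY hp full_p /eqmxP kp1.
apply: (sub_in_zero M _ vY (quot_real_full_dim rp)).
apply: pseudo_torsion_quot PM0 vY hp full_p _.
exact: strict_sub_eq (eqmx_sym kp1) (strict_sub_self HG GM0).
Qed.

Lemma sub_in_P_img (A N : rmod) (phi : 'M[F]_(rdim A, rdim N)) :
  P A -> strict_morphism G phi -> sub_in P phi.
Proof.
move=> PA [_ GN hphi sK _].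
have [Z [ez rZ]] := sub_real_exists (torsion_valid HG GN) (submodmx_hom hphi).
exists Z, ez; split=> //; case: (rZ) => vZ hez free_ez /eqmxP eZ.
have [hg Eg] : is_hom (phi *m pinvmx ez) /\ phi *m pinvmx ez *m ez = phi.
  by apply: hom_factor; rewrite ?eZ.
apply: pseudo_torsion_quot PA vZ hg _ _.
  by apply: row_full_factor free_ez Eg _; rewrite eZ.
apply: strict_sub_eq sK; rewrite -[X in (kermx X :=: _)%MS]Eg; exact: kermxM_free.
Qed.

Lemma sub_in_P_preimmx_img (M Y A : rmod) k (T : 'M[F]_(k, rdim M))
  (p : 'M[F]_(rdim M, rdim Y)) (phi : 'M[F]_(rdim A, rdim Y)) :
  G M -> strict_sub G T -> sub_in P T -> quot_real T p -> P A -> strict_morphism G phi ->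
  sub_in P (preimmx p phi).
Proof.
move=> GM sT [A0 [e0 [rT PA0]]] rp PA smphi; have vM := torsion_valid HG GM.
have sI := strict_sub_preimmx_img HG vM sT rp smphi.
have [XI [eI rI]] := sub_real_exists vM (sub_in_submodmx (proj1 sI)).
have [Z [ez [rZ PZ]]] := sub_in_P_img PA smphi.
case: (rp) => vY hp full_p /eqmxP kpT.
case: (rI) => vXI heI free_eI /eqmxP eI_I; case: (rT) => _ _ _ /eqmxP e0T.
have TI : (T <= preimmx p phi)%MS by rewrite -kpT kermx_sub_preimmx.
have Ef : e0 *m pinvmx eI *m eI = e0 by apply: mulmxKpV; rewrite e0T eI_I.
exists XI, eI; split=> //.
case: HP => _ _ _ extP; apply: (extP _ _ _ _ _ PA0 PZ); split.
- exact: pseudo_torsion_in.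
- exact: (sub_real_in HG rI (proj1 sI)).
- exact: pseudo_torsion_in.
- apply: (short_exact_restrict hp rI rT rZ).
    by apply/eqmxP/andP; split; [rewrite sub_capmx TI kpT submx_refl | rewrite -kpT capmxSr].
  exact: eqmx_sym (preimmxK (submx_full _ full_p)).
- apply: (strict_sub_free_img HG vM heI free_eI); rewrite Ef.
    exact: sub_in_eq (eqmx_sym e0T) (proj1 sT).
  move=> k' D sD _; exact: sub_in_eq (cap_eqmx (eqmx_sym e0T) (eqmx_refl D)) (proj2 sT _ _ sD).
Qed.

Lemma torsion_part_exists (M : rmod) : G M -> exists T : 'M[F]_(rdim M), torsion_part G P T.
Proof.
move=> GM; have vM := torsion_valid HG GM.
pose Q r := exists T : 'M[F]_(rdim M), [/\ strict_sub G T, sub_in P T & \rank T = r].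
have [r [[T [sT PT rankT]] Tmax]] : exists r, Q r /\ forall r', Q r' -> (r' <= r)%N.
  apply: (@ex_max_bounded _ (rdim M)); last by move=> r [T [_ _ <-]]; exact: rank_leq_col.
  by exists 0%N, 0; split; [exact: strict_sub0 | exact: sub_in_P0 | exact: mxrank0].
have [Y [p rp]] := quot_real_exists vM (sub_in_submodmx (proj1 sT)).
exists T; split=> //; exists Y, p; split=> //.
case: (rp) => vY hp full_p /eqmxP kpT.
split=> [|A phi PA smphi]; first exact: (torsion_quot HG GM vY hp full_p).
have TI : (T <= preimmx p phi)%MS by rewrite -kpT kermx_sub_preimmx.
have /Tmax rankI : Q (\rank (preimmx p phi)).
  exists (preimmx p phi); split=> //; first exact: (strict_sub_preimmx_img HG vM sT rp smphi).
  exact: sub_in_P_preimmx_img GM sT PT rp PA smphi.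
have IT : (preimmx p phi <= T)%MS by rewrite -(geq_leqif (mxrank_leqif_sup TI)) rankT.
apply/eqP; rewrite -submx0 -(preimmxK (submx_full phi full_p)) submx0.
by apply/eqP/sub_kermxP; rewrite kpT.
Qed.

Lemma torsion_part_mulmx (M N : rmod) (phi : 'M[F]_(rdim M, rdim N)) kU kV
  (U : 'M[F]_(kU, rdim M)) (V : 'M[F]_(kV, rdim N)) :
  strict_morphism G phi -> torsion_part G P U -> torsion_part G P V ->
  (U *m phi <= V)%MS.
Proof.
move=> smphi [sU [A [e [rU PA]]] _] [sV _ [Y [p [rV [_ perpY]]]]].
have psi0 : e *m phi *m p = 0.
  apply: perpY PA _.
  exact: (strict_morphism_sub_quot HG smphi rU sU rV sV).
case: rU => _ _ _ /eqmxP eU; case: rV => _ _ _ /eqmxP kpV.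
by rewrite -(eqmxMr phi eU) -kpV; apply/sub_kermxP.
Qed.

Lemma torsion_part_eqmx (M : rmod) k1 k2 (U : 'M[F]_(k1, rdim M)) (V : 'M[F]_(k2, rdim M)) :
  G M -> torsion_part G P U -> torsion_part G P V -> (U :=: V)%MS.
Proof.
move=> GM tU tV; have sm1 := strict_morphism1 HG GM.
by apply/eqmxP/andP; split; rewrite -[X in (X <= _)%MS]mulmx1; exact: torsion_part_mulmx.
Qed.

End PseudoTorsion.

Theorem mainTheorem9 (F : fieldType) (Lam : falgType F) (G P : mclass Lam) :
  torsion_class G -> pseudo_torsion G P ->
  (forall M : rmod Lam, G M ->
     exists U : 'M[F]_(rdim M),
       torsion_part G P U /\
       (forall k (V : 'M[F]_(k, rdim M)), torsion_part G P V -> (V == U)%MS) /\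
       (forall (X Y : rmod Lam) (e : 'M[F]_(rdim X, rdim M)) (p : 'M[F]_(rdim M, rdim Y)),
          sub_real U e -> quot_real U p -> strict_exact G e p)) /\
  (forall (M N : rmod Lam) (phi : 'M[F]_(rdim M, rdim N)),
     strict_morphism G phi ->
     forall kU kV (U : 'M[F]_(kU, rdim M)) (V : 'M[F]_(kV, rdim N)),
     torsion_part G P U -> torsion_part G P V ->
     (U *m phi <= V)%MS /\
     forall (X X' Y Y' : rmod Lam)
            (e : 'M[F]_(rdim X, rdim M)) (e' : 'M[F]_(rdim X', rdim N))
            (p : 'M[F]_(rdim M, rdim Y)) (p' : 'M[F]_(rdim N, rdim Y')),
       sub_real U e -> sub_real V e' -> quot_real U p -> quot_real V p' ->
       exists (alpha : 'M[F]_(rdim X, rdim X')) (beta : 'M[F]_(rdim Y, rdim Y')),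
         [/\ strict_morphism G alpha, strict_morphism G beta,
             alpha *m e' = e *m phi & p *m beta = phi *m p']).
Proof.
move=> HG HP; split=> [M GM | M N phi smphi kU kV U V tU tV].
  have [T tT] := torsion_part_exists HG HP GM.
  exists T; split=> //; split=> [k V tV | X Y e p rT rp].
    by apply/eqmxP; exact: (torsion_part_eqmx HG GM tV tT).
  by case: tT => sT _ _; exact: (strict_exact_sub_quot HG GM sT rT rp).
have UV := torsion_part_mulmx HG smphi tU tV.
split=> // X X' Y Y' e e' p p' rU rV rU' rV'.
have [[sU _ _] [sV _ _]] := (tU, tV).
have [alpha_strict Ealpha] := strict_morphism_restrict HG smphi sU (proj1 sV) UV rU rV.
have [beta_strict Ebeta] := strict_morphism_quot HG smphi (proj1 sU) sV UV rU' rV'.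
by exists (e *m phi *m pinvmx e'), (pinvmx p *m phi *m p').
Qed.
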